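(* Let $n\ge 1$ and let $b_1,\ldots,b_{2^n}\in\{0,1\}$ be such that the cyclic sequence $[b_1,\ldots,b_{2^n}]$ is a binary De Bruijn cycle of order $n$ (its $2^n$ cyclic windows of length $n$ are all distinct). For a seed $(z_1,z_2)\in\{0,1\}^2$ define $z_i=b_{i-2}+z_{i-1}+z_{i-2}\pmod 2$ for $i=3,\ldots,2^n+2$, and let $\mathcal{D}(z_1z_2)=z_{2^n+1}z_{2^n+2}$. Then $\mathcal{D}$ is a permutation of $\{00,01,10,11\}$ with exactly one fixed point $z_1z_2$, given by $$z_1=a_0+\delta_{\tilde n,0}\,a_1+\delta_{\tilde n,1}\,a_2,\qquad z_2=a_1+\delta_{\tilde n,0}\,a_2+\delta_{\tilde n,1}\,a_0\pmod 2,$$ where $\tilde n=n\bmod 2$, $\delta$ is the Kronecker delta, and $a_j=\sum_i b_{3i+j}\bmod 2$ for $j=0,1,2$, the sum running over all integers $i$ with $1\le 3i+j\le 2^n$. Consequently, the preimage of this De Bruijn cycle under the homomorphism $B_{n+2}\to B_n$ induced by $d(x_1,x_2,x_3)=x_1+x_2+x_3$ consists of exactly two vertex-disjoint cycles in $B_{n+2}$: one of length $2^n$ (started at the fixed seed) and one of length $3\cdot 2^n$ (formed by the other three seeds).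
   Context: $B_m$ denotes the binary De Bruijn digraph with vertex set $\{0,1\}^m$ and an edge from $(x_1,\ldots,x_m)$ to $(y_1,\ldots,y_m)$ iff $y_i=x_{i+1}$ for $i<m$. The homomorphism induced by $d$ sends $(x_1,\ldots,x_{n+2})$ to $(d(x_1,x_2,x_3),\ldots,d(x_n,x_{n+1},x_{n+2}))$. The sequence $z_1,\ldots,z_{2^n+2}$ is the preimage path of the cycle started from the seed $z_1z_2$, i.e. $d(z_j,z_{j+1},z_{j+2})=b_j$ for $j=1,\ldots,2^n$. *)

From mathcomp Require Import all_boot.
Set Implicit Arguments. Unset Strict Implicit. Unset Printing Implicit Defensive.

(* Convention: b : nat -> bool is read 1-indexed; only b 1, ..., b (2^n)
   matter.  Addition mod 2 on {0,1} is boolean xor (addb, notation (+)). *)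

Definition window (n : nat) (b : nat -> bool) (i : nat) : seq bool :=
  [seq b ((i.-1 + k) %% 2 ^ n).+1 | k <- iota 0 n].

Definition debruijn_cycle (n : nat) (b : nat -> bool) : Prop :=
  forall i j, 1 <= i <= 2 ^ n -> 1 <= j <= 2 ^ n ->
    window n b i = window n b j -> i = j.

(* zpair b s k = (z_{k+1}, z_{k+2}) for seed s = (z_1, z_2), with
   z_i = b_{i-2} + z_{i-1} + z_{i-2} (mod 2). *)
Fixpoint zpair (b : nat -> bool) (s : bool * bool) (k : nat) : bool * bool :=
  match k with
  | 0 => s
  | k'.+1 => let: (x, y) := zpair b s k' in (y, b k'.+1 (+) y (+) x)
  end.

Definition zval (b : nat -> bool) (s : bool * bool) (i : nat) : bool :=
  (zpair b s i.-1).1.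

Definition Dmap (n : nat) (b : nat -> bool) (s : bool * bool) : bool * bool :=
  zpair b s (2 ^ n).

Definition acoef (n : nat) (b : nat -> bool) (j : nat) : bool :=
  \big[addb/false]_(1 <= k < (2 ^ n).+1 | k %% 3 == j) b k.

Definition kdelta (x y : nat) : bool := x == y.

Definition bruijn_vertex (m : nat) (x : seq bool) : bool := size x == m.
Definition bruijn_edge (m : nat) (x y : seq bool) : bool :=
  [&& size x == m, size y == m & behead x == take m.-1 y].

Definition dhom (x : seq bool) : seq bool :=
  [seq nth false x k (+) nth false x k.+1 (+) nth false x k.+2
  | k <- iota 0 (size x - 2)].

Definition cyc_vertex (n : nat) (b : nat -> bool) (u : seq bool) : Prop :=
  exists2 i, 1 <= i <= 2 ^ n & u = window n b i.
Definition cyc_edge (n : nat) (b : nat -> bool) (u v : seq bool) : Prop :=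
  exists2 i, 1 <= i <= 2 ^ n &
    u = window n b i /\ v = window n b ((i %% 2 ^ n).+1).

Definition pre_vertex (n : nat) (b : nat -> bool) (x : seq bool) : Prop :=
  bruijn_vertex (n + 2) x /\ cyc_vertex n b (dhom x).
Definition pre_edge (n : nat) (b : nat -> bool) (x y : seq bool) : Prop :=
  bruijn_edge (n + 2) x y /\ cyc_edge n b (dhom x) (dhom y).

Definition seq_cycle_edge (c : seq (seq bool)) (x y : seq bool) : bool :=
  (x \in c) && (next c x == y).

(* The vertex (z_1, ..., z_{n+2}) of B_{n+2} from which the preimage path of
   seed s starts. *)
Definition start_vertex (n : nat) (b : nat -> bool) (s : bool * bool) :=
  [seq zval b s i | i <- iota 1 (n + 2)].

Definition fixed_seed (n : nat) (b : nat -> bool) : bool * bool :=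
  let a := acoef n b in
  (a 0 (+) (kdelta (n %% 2) 0 && a 1) (+) (kdelta (n %% 2) 1 && a 2),
   a 1 (+) (kdelta (n %% 2) 0 && a 2) (+) (kdelta (n %% 2) 1 && a 0)).

From mathcomp Require Import all_boot.
Set Implicit Arguments. Unset Strict Implicit. Unset Printing Implicit Defensive.

(* Over GF(2) the recurrence
      z_i = b_{i-2} + z_{i-1} + z_{i-2} is affine: its linear part
      M(x, y) = (y, x + y) has order 3, so (z_{N+1}, z_{N+2}) equals
      M^(N mod 3) (z_1, z_2) plus a vector built from the partial sums of the
      b_k over the residue classes mod 3.  Since 2^n mod 3 depends only on the
      parity of n, D is an explicit affine map of {0,1}^2 in the parameters
      (n mod 2, a_0, a_1, a_2).
   2. A finite check on these 16 parameter values: D^3 = id, the closed-form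
      seed is its only fixed point, and the three other seeds form one orbit.
   3. The preimage walks.  Extending b periodically, the seed s yields an
      infinite walk in B_{n+2} whose k-th vertex maps under d to the window
      of b at position k; after 2^n steps the walk continues from the seed
      D s.  Because b is De Bruijn, a vertex of the preimage is determined by
      its position in C and its first two letters, so the preimage is the
      disjoint union of the walk from the fixed seed (length 2^n) and the walk
      from any other seed (length 3 * 2^n, closing up since D^3 = id). *)

Lemma next_mkseq (T : eqType) (F : nat -> T) L k :
  uniq (mkseq F L) -> F L = F 0 -> k < L ->
  F k \in mkseq F L /\ next (mkseq F L) (F k) = F k.+1.
Proof.
move=> u e hk.
have mem : F k \in mkseq F L by apply/mapP; exists k => //; rewrite mem_iota.
split=> //; rewrite next_nth mem.
have ix : index (F k) (mkseq F L) = k.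
  by rewrite -{1}(nth_mkseq (F 0) F hk) index_uniq ?size_mkseq.
case: L u e hk mem ix => // L u e hk mem ix.
rewrite ix /mkseq /=.
have [hkl|->] : k < L \/ k = L.
  by move: hk; rewrite ltnS leq_eqVlt => /orP [/eqP|]; [right|left].
- by rewrite (nth_map 0) ?size_iota // nth_iota // add1n.
- by rewrite nth_default ?size_map ?size_iota // e.
Qed.

Lemma mem_mkseqP (T : eqType) (F : nat -> T) L x :
  x \in mkseq F L -> exists2 k, k < L & x = F k.
Proof. by case/mapP => k; rewrite mem_iota add0n => /andP [_ hk] ->; exists k. Qed.

Definition psum (b : nat -> bool) (N j : nat) : bool :=
  \big[addb/false]_(1 <= k < N.+1 | k %% 3 == j) b k.

Lemma psumS b N j : psum b N.+1 j = psum b N j (+) ((N.+1 %% 3 == j) && b N.+1).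
Proof.
rewrite /psum big_mkcond /= big_nat_recr //= -big_mkcond /=.
by case: (_ == _) => //=; rewrite addbF.
Qed.

(* The linear part of one step of the recurrence; it has order 3. *)
Definition hstep (s : bool * bool) : bool * bool := (s.2, s.1 (+) s.2).

(* The value of zpair after N steps: the linear part applied N mod 3 times,
   plus the contribution of the b_k's grouped by residue class. *)
Definition zclosed (b : nat -> bool) (s : bool * bool) (N : nat) :=
  let r := N %% 3 in
  (psum b N ((r + 1) %% 3) (+) psum b N ((r + 2) %% 3) (+) (iter r hstep s).1,
   psum b N r (+) psum b N ((r + 2) %% 3) (+) (iter r hstep s).2).

Lemma zpair_closed b s N : zpair b s N = zclosed b s N.
Proof.
case: s => x y; elim: N => [|N IH]; first by rewrite /zclosed /psum !big_geq.
rewrite /= IH {IH} /zclosed !psumS.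
have -> : N.+1 %% 3 = (N %% 3 + 1) %% 3 by rewrite modnDml addn1.
have : N %% 3 < 3 by rewrite ltn_mod.
case: (N %% 3) => [|[|[|r]]] //= _;
  by case: (psum b N 0); case: (psum b N 1); case: (psum b N 2);
     case: (b N.+1); case: x; case: y.
Qed.

Lemma exp2_mod3 n : 2 ^ n %% 3 = if odd n then 2 else 1.
Proof. by elim: n => // n IH; rewrite expnS -modnMmr IH /=; case: (odd n). Qed.

Definition Daff (o a0 a1 a2 : bool) (s : bool * bool) : bool * bool :=
  if o then (a0 (+) a1 (+) (s.1 (+) s.2), a2 (+) a1 (+) s.1)
  else (a2 (+) a0 (+) s.2, a1 (+) a0 (+) (s.1 (+) s.2)).

Lemma Dmap_affine n b s :
  Dmap n b s = Daff (odd n) (acoef n b 0) (acoef n b 1) (acoef n b 2) s.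
Proof.
rewrite /Dmap zpair_closed /zclosed exp2_mod3 /Daff.
by case: (odd n); case: s => [[] []].
Qed.

(* The paper's closed-form seed, and a seed outside its orbit. *)
Definition fix_aff (o a0 a1 a2 : bool) : bool * bool :=
  (a0 (+) (~~ o && a1) (+) (o && a2), a1 (+) (~~ o && a2) (+) (o && a0)).

Definition other_aff (o a0 a1 a2 : bool) : bool * bool :=
  (~~ (fix_aff o a0 a1 a2).1, (fix_aff o a0 a1 a2).2).

Lemma fixed_seed_affine n b :
  fixed_seed n b = fix_aff (odd n) (acoef n b 0) (acoef n b 1) (acoef n b 2).
Proof. by rewrite /fixed_seed /kdelta modn2 /fix_aff; case: (odd n). Qed.

Section AffineDynamics.
Variables o a0 a1 a2 : bool.
Local Notation D := (Daff o a0 a1 a2).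
Local Notation f := (fix_aff o a0 a1 a2).
Local Notation g := (other_aff o a0 a1 a2).

Lemma Daff_fixP s : D s = s <-> s = f.
Proof.
case: s => x y; split => [|->].
  by case: o a0 a1 a2 x y => [] [] [] [] [] [].
by case: o a0 a1 a2 => [] [] [] [].
Qed.

Lemma Daff_order3 s : D (D (D s)) = s.
Proof. by case: s => x y; case: o a0 a1 a2 x y => [] [] [] [] [] []. Qed.

Lemma Daff_orbit t : t <> f -> exists2 q, q < 3 & t = iter q D g.
Proof.
case: t => x y; case: o a0 a1 a2 x y => [] [] [] [] [] [] // _;
  by [exists 0 | exists 1 | exists 2].
Qed.

Lemma Daff_orbit_nofix q : q < 3 -> iter q D g <> f.
Proof. by case: q => [|[|[|q]]] //= _; case: o a0 a1 a2 => [] [] [] []. Qed.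

Lemma Daff_orbit_inj q q' : q < 3 -> q' < 3 -> iter q D g = iter q' D g -> q = q'.
Proof.
case: q => [|[|[|q]]] //= _; case: q' => [|[|[|q']]] //= _;
  by case: o a0 a1 a2 => [] [] [] [].
Qed.
End AffineDynamics.

Lemma nth_dhom x j : j < size x - 2 ->
  nth false (dhom x) j = nth false x j (+) nth false x j.+1 (+) nth false x j.+2.
Proof. by move=> hj; rewrite /dhom (nth_map 0) ?size_iota // nth_iota. Qed.

(* A word is determined by its first two letters and its image under dhom,
   since each further letter is recovered from the previous two. *)
Lemma dhom_determined x y : size x = size y ->
  nth false x 0 = nth false y 0 -> nth false x 1 = nth false y 1 ->
  dhom x = dhom y -> x = y.
Proof.
move=> sxy e0 e1 ed.
have two_letters j : j.+1 < size x ->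
    nth false x j = nth false y j /\ nth false x j.+1 = nth false y j.+1.
  elim: j => [|j IH] hj //; have [IH1 IH2] := IH (ltnW hj); split=> //.
  have hx : j < size x - 2 by rewrite ltn_subRL addnC addn2.
  have := nth_dhom hx; rewrite ed nth_dhom -?sxy // IH1 IH2.
  by case: (nth false x j.+2); case: (nth false y j.+2);
     case: (nth false y j); case: (nth false y j.+1).
apply: (eq_from_nth (x0 := false)) => // [[|i] hi] //.
by case: (two_letters i hi).
Qed.

Section PreimageWalks.
Variables (n : nat) (b : nat -> bool).
Local Notation N := (2 ^ n).
Local Notation D := (Dmap n b).

Let N_gt0 : 0 < N. Proof. by rewrite expn_gt0. Qed.

Definition bper (m : nat) : bool := b ((m.-1 %% N).+1).

Definition zper (s : bool * bool) (m : nat) : bool * bool := zpair bper s m.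

Definition walk (s : bool * bool) (k : nat) : seq bool :=
  mkseq (fun j => (zper s (k + j)).1) (n + 2).

Lemma zperS s m :
  zper s m.+1 = ((zper s m).2, bper m.+1 (+) (zper s m).2 (+) (zper s m).1).
Proof. by rewrite /zper /=; case: (zpair bper s m). Qed.

(* During the first N steps bper agrees with b. *)
Lemma zpair_zper s m : m <= N -> zpair b s m = zper s m.
Proof.
elim: m => // m IH hm.
rewrite zperS -IH ?(ltnW hm) //= /bper /= modn_small //.
by case: (zpair b s m).
Qed.

Lemma zper_period s m : zper s (m + N) = zper (D s) m.
Proof.
elim: m => [|m IH]; first by rewrite add0n -zpair_zper.
rewrite addSn !zperS IH; congr (_, _ (+) _ (+) _).
by rewrite /bper /= modnDr.
Qed.

Lemma walk_period s q m : walk s (q * N + m) = walk (iter q D s) m.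
Proof.
apply: eq_mkseq => j; rewrite -addnA; congr fst.
elim: q s => [|q IH] s; first by rewrite mul0n add0n.
by rewrite mulSn -addnA addnC zper_period IH iterSr.
Qed.

Lemma walk_mod s r : walk s r = walk (iter (r %/ N) D s) (r %% N).
Proof. by rewrite {1}(divn_eq r N) walk_period. Qed.

Lemma zper_inj m : injective (zper ^~ m).
Proof.
elim: m => [|m IH] s t //=; rewrite !zperS => -[e1 e2]; apply: IH.
move: e1 e2; case: (zper s m) => x y; case: (zper t m) => x' y' /= ->.
by case: (bper m.+1); case: y'; case: x; case: x'.
Qed.

Lemma zper_surj m u : exists s, zper s m = u.
Proof. by have [h _ hK] := injF_bij (@zper_inj m); exists (h u); rewrite hK. Qed.

Lemma size_walk s k : size (walk s k) = n + 2.
Proof. exact: size_mkseq. Qed.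

Lemma nth_walk s k j : j < n + 2 -> nth false (walk s k) j = (zper s (k + j)).1.
Proof. exact: nth_mkseq. Qed.

Lemma dhom_walk s k : dhom (walk s k) = window n b ((k %% N).+1).
Proof.
rewrite /dhom /window size_walk addnK; apply/eq_in_map => j.
rewrite mem_iota add0n => /andP [_ hj].
have hj2 : j.+2 < n + 2 by rewrite addn2.
rewrite !nth_walk // ?(ltnW hj2) ?(ltnW (ltnW hj2)) //.
rewrite !addnS !zperS /= /bper /= modnDml.
by case: (zper s (k + j)) => x y /=; case: x; case: y; case: (b _).
Qed.

Lemma walk_edge s k : bruijn_edge (n + 2) (walk s k) (walk s k.+1).
Proof.
rewrite /bruijn_edge !size_walk eqxx /= addn2 /=; apply/eqP.
apply: (eq_from_nth (x0 := false)).
  by rewrite size_behead size_take !size_walk addn2 ltnSn.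
rewrite size_behead size_walk addn2 /= => j hj.
rewrite nth_behead nth_take // !nth_walk ?addn2 ?ltnS ?(ltnW hj) //.
by rewrite addSn addnS.
Qed.

Lemma start_vertex_walk s : start_vertex n b s = walk s 0.
Proof.
apply: (eq_from_nth (x0 := false)); first by rewrite size_map size_iota size_walk.
rewrite size_map size_iota => j hj.
rewrite (nth_map 0) ?size_iota // nth_iota // nth_walk // add0n /zval add1n /=.
congr fst; apply: zpair_zper.
by apply: leq_trans (ltn_expl n (ltnSn 1)); rewrite -ltnS -addn2.
Qed.

Lemma walk_of_word x i : size x = n + 2 -> 1 <= i <= N ->
  dhom x = window n b i -> exists t, x = walk t i.-1.
Proof.
move=> sx /andP [hi1 hi2] ex.
have [t ht] := zper_surj i.-1 (nth false x 0, nth false x 1).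
exists t; apply: dhom_determined; rewrite ?size_walk //.
- by rewrite nth_walk ?addn2 // addn0 ht.
- by rewrite nth_walk ?addn2 // addn1 zperS ht.
- by rewrite dhom_walk ex modn_small ?prednK.
Qed.

Lemma walk_next t k y : 1 <= n ->
  bruijn_edge (n + 2) (walk t k) y -> dhom y = dhom (walk t k.+1) ->
  y = walk t k.+1.
Proof.
move=> hn /and3P [_ /eqP sy /eqP eb] ey.
rewrite addn2 /= in eb.
have letter j : j < 2 -> nth false y j = nth false (walk t k.+1) j.
  move=> hj; have hjn : j < n.+1 by apply: leq_trans hj _; rewrite ltnS.
  rewrite -(nth_take _ hjn) -eb nth_behead !nth_walk ?addn2 ?ltnS ?(ltnW hjn) //.
  by rewrite addSn addnS.
apply: dhom_determined; rewrite ?size_walk ?letter //.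
Qed.

Lemma pre_vertexP x : pre_vertex n b x <-> exists t r, r < N /\ x = walk t r.
Proof.
split=> [[/eqP sx [i hi ex]]|[t [r [hr ->]]]].
  have [t ->] := walk_of_word sx hi ex.
  by exists t, i.-1; case/andP: hi => hi1 hi2; rewrite prednK.
split; first by rewrite /bruijn_vertex size_walk.
by exists (r %% N).+1; [rewrite /= ltn_mod | rewrite dhom_walk].
Qed.

Lemma pre_edgeP x y : 1 <= n ->
  pre_edge n b x y <-> exists t r, x = walk t r /\ y = walk t r.+1.
Proof.
move=> hn; split=> [[exy [i hi [ex ey]]]|[t [r [-> ->]]]].
  have [/eqP sx _] := and3P exy.
  have [t xt] := walk_of_word sx hi ex.
  have hi1 : 0 < i by case/andP: hi.
  exists t, i.-1; split=> //; apply: walk_next; rewrite -?xt //.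
  by rewrite ey dhom_walk prednK.
split; first exact: walk_edge.
exists (r %% N).+1; first by rewrite /= ltn_mod.
by rewrite !dhom_walk -[(r %% N).+1]addn1 -[r.+1]addn1 modnDml.
Qed.

Hypothesis hdb : debruijn_cycle n b.

Lemma window_mod_inj k l :
  window n b ((k %% N).+1) = window n b ((l %% N).+1) -> k %% N = l %% N.
Proof.
have h m : 1 <= (m %% N).+1 <= N by rewrite /= ltn_mod.
by move=> e; case: (hdb (h k) (h l) e).
Qed.

Lemma walk_inj s t r r' : r < N -> r' < N -> walk s r = walk t r' ->
  s = t /\ r = r'.
Proof.
move=> hr hr' e.
have er : r = r'.
  by have := congr1 dhom e; rewrite !dhom_walk => /window_mod_inj; rewrite !modn_small.
subst r'; split=> //; apply: (@zper_inj r).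
have := congr1 (nth false ^~ 0) e; rewrite /= !nth_walk ?addn2 // !addn0.
have := congr1 (nth false ^~ 1) e; rewrite /= !nth_walk ?addn2 // !addn1 !zperS /=.
by case: (zper s r) => ? ?; case: (zper t r) => ? ? /= -> ->.
Qed.
End PreimageWalks.

Section SeedDynamics.
Variables (n : nat) (b : nat -> bool).
Local Notation D := (Dmap n b).
Local Notation Daff_nb := (Daff (odd n) (acoef n b 0) (acoef n b 1) (acoef n b 2)).

Definition other_seed : bool * bool :=
  other_aff (odd n) (acoef n b 0) (acoef n b 1) (acoef n b 2).

Lemma iter_Dmap q s : iter q D s = iter q Daff_nb s.
Proof. by apply: eq_iter => t; apply: Dmap_affine. Qed.

Lemma Dmap_fixP s : D s = s <-> s = fixed_seed n b.
Proof. by rewrite Dmap_affine fixed_seed_affine; apply: Daff_fixP. Qed.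

Lemma Dmap_order3 s : iter 3 D s = s.
Proof. by rewrite iter_Dmap; apply: Daff_order3. Qed.

Lemma Dmap_bijective : bijective D.
Proof. by exists (D \o D) => s; apply: Dmap_order3. Qed.

Lemma Dmap_orbit t : t <> fixed_seed n b -> exists2 q, q < 3 & t = iter q D other_seed.
Proof.
rewrite fixed_seed_affine => /Daff_orbit [q hq ->].
by exists q; rewrite ?iter_Dmap.
Qed.

Lemma Dmap_orbit_nofix q : q < 3 -> iter q D other_seed <> fixed_seed n b.
Proof. by rewrite iter_Dmap fixed_seed_affine; apply: Daff_orbit_nofix. Qed.

Lemma Dmap_orbit_inj q q' : q < 3 -> q' < 3 ->
  iter q D other_seed = iter q' D other_seed -> q = q'.
Proof. by rewrite !iter_Dmap; apply: Daff_orbit_inj. Qed.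
End SeedDynamics.

Section PreimageCycles.
Variables (n : nat) (b : nat -> bool).
Local Notation N := (2 ^ n).
Local Notation D := (Dmap n b).
Local Notation f := (fixed_seed n b).
Local Notation g := (other_seed n b).

Let N_gt0 : 0 < N. Proof. by rewrite expn_gt0. Qed.

Definition cyc1 : seq (seq bool) := mkseq (walk n b f) N.
Definition cyc2 : seq (seq bool) := mkseq (walk n b g) (3 * N).

Lemma cyc1_closes : walk n b f N = walk n b f 0.
Proof. by rewrite -[N]addn0 -{1}[N]mul1n walk_period /= (iffRL (Dmap_fixP _ _ _)). Qed.

Lemma cyc2_closes : walk n b g (3 * N) = walk n b g 0.
Proof. by rewrite -[3 * N]addn0 walk_period Dmap_order3. Qed.

Lemma orbit_time q r : q < 3 -> r < N -> q * N + r < 3 * N.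
Proof.
move=> hq hr; apply: (@leq_trans (q.+1 * N)); first by rewrite mulSn addnC ltn_add2r.
by rewrite leq_mul2r hq orbT.
Qed.

Hypothesis hdb : debruijn_cycle n b.

Lemma uniq_cycles : uniq (cyc1 ++ cyc2).
Proof.
have hmod m : m %% N < N by rewrite ltn_mod.
have hdiv m : m < 3 * N -> m %/ N < 3 by rewrite ltn_divLR.
rewrite cat_uniq; apply/and3P; split.
- rewrite map_inj_in_uniq ?iota_uniq // => k l.
  rewrite !mem_iota !add0n => /andP [_ hk] /andP [_ hl] e.
  by case: (walk_inj hdb hk hl e).
- apply/hasPn => x /mem_mkseqP [l hl ->]; apply/negP => /mem_mkseqP [k hk].
  rewrite walk_mod => /(walk_inj hdb (hmod l) hk) [e _].
  exact: (Dmap_orbit_nofix (hdiv l hl) e).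
- rewrite map_inj_in_uniq ?iota_uniq // => k l.
  rewrite !mem_iota !add0n => /andP [_ hk] /andP [_ hl].
  rewrite (walk_mod _ _ _ k) (walk_mod _ _ _ l).
  case/(walk_inj hdb (hmod k) (hmod l)) => /Dmap_orbit_inj eq er.
  by rewrite (divn_eq k N) (divn_eq l N) eq ?hdiv // er.
Qed.

Lemma cyc1_step k : k < N -> seq_cycle_edge cyc1 (walk n b f k) (walk n b f k.+1).
Proof.
move=> hk; move: uniq_cycles; rewrite cat_uniq => /andP [u1 _].
by rewrite /seq_cycle_edge /cyc1; have [-> /eqP] := next_mkseq u1 cyc1_closes hk.
Qed.

Lemma cyc2_step k : k < 3 * N ->
  seq_cycle_edge cyc2 (walk n b g k) (walk n b g k.+1).
Proof.
move=> hk; move: uniq_cycles; rewrite cat_uniq => /and3P [_ _ u2].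
by rewrite /seq_cycle_edge /cyc2; have [-> /eqP] := next_mkseq u2 cyc2_closes hk.
Qed.

Lemma walk_step_on_cycles t r :
  seq_cycle_edge cyc1 (walk n b t r) (walk n b t r.+1) \/
  seq_cycle_edge cyc2 (walk n b t r) (walk n b t r.+1).
Proof.
rewrite (walk_mod _ _ _ r).
have -> : walk n b t r.+1 = walk n b (iter (r %/ N) D t) (r %% N).+1.
  by rewrite -walk_period addnS -divn_eq.
have hr : r %% N < N by rewrite ltn_mod.
case: (iter (r %/ N) D t =P f) => [->|/Dmap_orbit [q hq ->]].
  by left; apply: cyc1_step.
by right; rewrite -!walk_period addnS; apply: cyc2_step; apply: orbit_time.
Qed.

Lemma cycles_vertices x : x \in cyc1 ++ cyc2 <-> pre_vertex n b x.
Proof.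
split=> [|/pre_vertexP [t [r [_ ->]]]].
  rewrite mem_cat => /orP [] /mem_mkseqP [k hk ->]; apply/pre_vertexP.
    by exists f, k.
  by rewrite walk_mod; exists (iter (k %/ N) D g), (k %% N); rewrite ltn_mod.
rewrite mem_cat; case: (walk_step_on_cycles t r) => /andP [-> _] //.
by rewrite orbT.
Qed.

Lemma cycles_edges x y : 1 <= n ->
  pre_edge n b x y <-> seq_cycle_edge cyc1 x y \/ seq_cycle_edge cyc2 x y.
Proof.
move=> hn; split=> [/(pre_edgeP _ _ _ hn) [t [r [-> ->]]]|].
  exact: walk_step_on_cycles.
move=> edge; apply/(pre_edgeP _ _ _ hn).
case: edge => /andP [/mem_mkseqP [k hk ->] /eqP <-].
  by have /andP [_ /eqP ->] := cyc1_step hk; exists f, k.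
by have /andP [_ /eqP ->] := cyc2_step hk; exists g, k.
Qed.

Lemma head_cyc1 : head [::] cyc1 = start_vertex n b f.
Proof. by rewrite start_vertex_walk /cyc1 /mkseq; case: (2 ^ n) N_gt0. Qed.

Lemma start_vertex_in_cyc2 s : s <> f -> start_vertex n b s \in cyc2.
Proof.
rewrite start_vertex_walk => /Dmap_orbit [q hq ->].
rewrite -[walk _ _ _ 0]walk_period addn0.
by apply/map_f; rewrite mem_iota -[q * N]addn0 orbit_time.
Qed.
End PreimageCycles.

Theorem mainTheorem5 (n : nat) (b : nat -> bool) :
  1 <= n -> debruijn_cycle n b ->
  bijective (Dmap n b) /\
  (forall s, Dmap n b s = s <-> s = fixed_seed n b) /\
  exists c1 c2 : seq (seq bool),
    size c1 = 2 ^ n /\ size c2 = 3 * 2 ^ n /\ uniq (c1 ++ c2) /\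
    head [::] c1 = start_vertex n b (fixed_seed n b) /\
    (forall s, s <> fixed_seed n b -> start_vertex n b s \in c2) /\
    (forall x, x \in c1 ++ c2 <-> pre_vertex n b x) /\
    (forall x y, pre_edge n b x y <->
       seq_cycle_edge c1 x y \/ seq_cycle_edge c2 x y).
Proof.
move=> hn hdb; split; first exact: Dmap_bijective.
split; first exact: Dmap_fixP.
exists (cyc1 n b), (cyc2 n b).
split; first exact: size_mkseq.
split; first exact: size_mkseq.
split; first exact: uniq_cycles.
split; first exact: head_cyc1.
split; first exact: start_vertex_in_cyc2.
split=> [x|x y]; first exact: cycles_vertices.
exact: cycles_edges.
Qed.
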